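(* Let $R$ be an environment with a single door pixel $s$, and let $A=|R|$. Run the Depth-First Leader-Follower (DFLF) strategy defined in the context until all of $R$ is filled. Then each robot makes at most $A$ moves. Consequently, the total number of moves made by all robots is at most $A^2$.
   Context: Pixels are the unit squares of the integer grid, identified with their lower-left corners $(i,j)\in\mathbb{Z}^2$. Two pixels are neighbors if they share an edge, so $(i,j)$ has the four neighbors $(i\pm1,j)$ and $(i,j\pm1)$. The environment $R$ is a finite set of pixels that is connected under this neighbor relation. It contains a single distinguished door pixel $s\in R$. Time is discrete, $t=0,1,2,\dots$. At each time, every pixel of $R$ holds at most one robot. $p(r,t)$ denotes the pixel occupied by robot $r$ at time $t$, and $\mathrm{prev}(r,t)=p(r,t-1)$. In one time step a robot either stays where it is or moves to a neighboring pixel of $R$ that is unoccupied. Vacating rule: if a robot occupies pixel $q$ at time $t$ and a different pixel at time $t+1$, then no robot occupies $q$ at time $t+1$; so the earliest a vacated pixel can be re-entered is time $t+2$. At time $0$ exactly one robot is present, on $s$. Door rule: whenever the robot on $s$ leaves, a new robot appears on $s$ as soon as the vacating rule allows. A pixel of $R$ is a frontier pixel at time $t$ if no robot has occupied it at any time $\le t$. The DFLF strategy works as follows. - Each robot is either moving or stopped. A moving robot is either the leader or a follower. - The first robot is the leader. Each newly appearing robot becomes the successor of the robot that most recently left the door, and that robot becomes its predecessor $\mathrm{pred}(r)$. These relations never change. - At each step, the leader behaves as follows. If the leader has a neighboring frontier pixel, it moves to one of them (chosen arbitrarily). Otherwise it becomes stopped permanently and leadership passes to its successor. If the leader has no frontier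 neighbor and is on the door $s$, the algorithm halts. - A follower $r$ moves at time $t$ to the pixel $\mathrm{prev}(\mathrm{pred}(r),t)$ previously occupied by its predecessor. - A stopped robot never moves again. Makespan: the first time $t^*$ at which every pixel of $R$ is occupied. *)

From HB Require Import structures.
From mathcomp Require Import all_boot all_order all_algebra.
From mathcomp Require Import finmap.
Set Implicit Arguments. Unset Strict Implicit. Unset Printing Implicit Defensive.
Import GRing.Theory Num.Theory.
Local Open Scope fset_scope.

(** Pixels are identified with their lower-left corners (i,j) in Z^2. *)
Definition pixel := (int * int)%type.

Definition adj (p q : pixel) : bool :=
  ((p.1 == q.1) && ((p.2 == (q.2 + 1)%R) || (q.2 == (p.2 + 1)%R))) ||
  ((p.2 == q.2) && ((p.1 == (q.1 + 1)%R) || (q.1 == (p.1 + 1)%R))).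

Definition connected_env (R : {fset pixel}) : Prop :=
  forall p q, p \in R -> q \in R ->
    exists l : seq pixel,
      [/\ path adj p l, all (fun x => x \in R) l & last p l = q].

(** A run is described by
    - [pos t r] : the pixel of robot number [r] at time [t] ([None] if robot
      [r] has not appeared yet). Robots are numbered in order of appearance,
      so [pred (r+1) = r];
    - [lead t] : the index of the current leader at time [t]; robots with a
      smaller index are stopped, present robots with larger index are
      followers. *)
Section Run.
Variables (R : {fset pixel}) (s : pixel)
          (pos : nat -> nat -> option pixel) (lead : nat -> nat).

Definition occupied (t : nat) (q : pixel) : Prop := exists r, pos t r = Some q.

Definition frontier (t : nat) (q : pixel) : Prop :=
  q \in R /\ forall t', t' <= t -> ~ occupied t' q.

Definition has_frontier_nb (t : nat) (p : pixel) : Prop :=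
  exists q, adj p q /\ frontier t q.

Definition halted (t : nat) : Prop :=
  pos t (lead t) = Some s /\ ~ has_frontier_nb t s.

(** The robot on s left it during step t-1 -> t (so s is free at time t and,
    by the vacating rule, a new robot may appear at time t+1). *)
Definition door_vacated (t : nat) : Prop :=
  0 < t /\ exists r, pos t.-1 r = Some s /\ pos t r <> Some s.

Definition dflf_step (t : nat) : Prop :=
  let L := lead t in
  (exists p, pos t L = Some p /\
     (has_frontier_nb t p ->
        exists q, [/\ adj p q, frontier t q, pos t.+1 L = Some q & lead t.+1 = L])
     /\ (~ has_frontier_nb t p -> pos t.+1 L = Some p /\ lead t.+1 = L.+1))
  /\ (forall r, r < L -> pos t.+1 r = pos t r)
  (* a follower moves to prev(pred(r), t) = p(pred(r), t-1) *)
  /\ (forall r, L < r -> pos t r <> None -> pos t.+1 r = pos t.-1 r.-1)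
  /\ (forall r, L < r -> pos t r = None ->
        (pos t.+1 r = Some s /\ (door_vacated t /\ pos t r.-1 <> None))
        \/ (pos t.+1 r = None /\ ~ (door_vacated t /\ pos t r.-1 <> None))).

Definition dflf_run : Prop :=
  [/\ pos 0 0 = Some s, (forall r, 0 < r -> pos 0 r = None), lead 0 = 0 &
      forall t, (halted t -> (forall r, pos t.+1 r = pos t r) /\ lead t.+1 = lead t)
                /\ (~ halted t -> dflf_step t)].

Definition filled (t : nat) : Prop := forall q, q \in R -> occupied t q.

Definition makespan (T : nat) : Prop := filled T /\ forall t, t < T -> ~ filled t.

End Run.

Definition moves (pos : nat -> nat -> option pixel) (r T : nat) : nat :=
  \sum_(t < T) ((pos t r != None) && (pos t.+1 r != pos t r)).

From HB Require Import structures.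
From mathcomp Require Import all_boot all_order all_algebra.
From mathcomp Require Import finmap.
From mathcomp Require Import zify.
From Stdlib Require Import Classical.
Set Implicit Arguments. Unset Strict Implicit.

(* A leader only moves to frontier pixels, and a follower repeats the moves of
   its predecessor two steps later; along the chain of predecessors, every move
   of a robot therefore enters a pixel that robot never occupied before, so a
   robot makes at most |R| moves.  For the total, robot r cannot be present
   before time 2 r, while up to the makespan T the leadership passes on at every
   step except those where the leader enters a fresh frontier pixel other than
   the door, of which there are fewer than |R|.  Hence 2 r <= T < |R| + lead T
   <= 2 |R| for every robot present at T, and only the robots r < |R| move. *)

Local Open Scope fset_scope.

Lemma sum_bool_count (b : pred nat) n : \sum_(t < n) b t = count b (iota 0 n).
Proof.
elim: n => [|n IH]; first by rewrite big_ord0.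
by rewrite big_ord_recr IH -[in RHS]addn1 iotaD count_cat /= addn0.
Qed.

Lemma sum_injective_le_card (X : choiceType) (A : {fset X}) (b : pred nat)
    (f : nat -> X) n :
  (forall t, t < n -> b t -> f t \in A) ->
  (forall t1 t2, t1 < t2 < n -> b t1 -> b t2 -> f t1 != f t2) ->
  \sum_(t < n) b t <= #|` A|.
Proof.
move=> fA f_inj; rewrite sum_bool_count -size_filter -(size_map f).
have mem_times t : t \in [seq t <- iota 0 n | b t] -> t < n /\ b t.
  by rewrite mem_filter mem_iota add0n => /andP[-> /andP[_ ->]].
apply: uniq_leq_size => [|_ /mapP[t /mem_times[tn bt] ->]]; last exact: fA.
rewrite map_inj_in_uniq ?filter_uniq ?iota_uniq // => t1 t2.
move=> /mem_times[t1n bt1] /mem_times[t2n bt2] eqf.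
case: (ltngtP t1 t2) => // [lt12|lt21].
  by have := f_inj t1 t2; rewrite lt12 t2n eqf eqxx => /(_ isT bt1 bt2).
by have := f_inj t2 t1; rewrite lt21 t1n eqf eqxx => /(_ isT bt2 bt1).
Qed.

Lemma sum_bounded_le_sqr (m : nat -> nat) k N :
  (forall r, m r <= k) -> (forall r, k <= r -> m r = 0) -> \sum_(r < N) m r <= k ^ 2.
Proof.
move=> mk m0; suff: \sum_(r < N) m r <= minn N k * k.
  by move/leq_trans; apply; rewrite expnS expn1 leq_mul2r geq_minr orbT.
elim: N => [|N IH]; first by rewrite big_ord0.
rewrite big_ord_recr /=; case: (ltnP N k) => [Nk|kN].
  rewrite (minn_idPl (ltnW Nk)) in IH; rewrite (minn_idPl Nk) mulSn addnC.
  exact: leq_add (mk N) IH.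
rewrite m0 // addn0 (minn_idPr (leqW kN)).
by rewrite (minn_idPr kN) in IH.
Qed.

Section DFLF.
Variables (R : {fset pixel}) (s : pixel)
          (pos : nat -> nat -> option pixel) (lead : nat -> nat) (T : nat).
Hypothesis run : dflf_run R s pos lead.
Hypothesis running : forall t, t < T -> ~ halted R s pos lead t.

Lemma pos_start : pos 0 0 = Some s. Proof. by case: run. Qed.
Lemma pos_start_absent r : 0 < r -> pos 0 r = None.
Proof. by case: run => _ + _ _; apply. Qed.
Lemma lead_start : lead 0 = 0. Proof. by case: run. Qed.

Lemma step_running t : t < T -> dflf_step R s pos lead t.
Proof. by case: run => _ _ _ steps /running; case: (steps t) => _; apply. Qed.

Lemma lead_present t : pos t (lead t) <> None.
Proof.
case: run => _ _ _ /(_ t) [_ step].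
case: (classic (halted R s pos lead t)) => [[-> _] //|/step [[p [-> _]] _] //].
Qed.

Lemma door_not_frontier t : ~ frontier R pos t s.
Proof. by move=> [_ /(_ 0 (leq0n t))]; apply; exists 0; rewrite pos_start. Qed.

Lemma stopped_stay t r : t < T -> r < lead t -> pos t.+1 r = pos t r.
Proof. by move=> /step_running [_ [+ _]]; apply. Qed.

Lemma follower_step t r : t < T -> lead t < r -> pos t r <> None ->
  pos t.+1 r = pos t.-1 r.-1.
Proof. by move=> /step_running [_ [_ [+ _]]]; apply. Qed.

Lemma leader_step t : t < T ->
  (exists q, [/\ frontier R pos t q, pos t.+1 (lead t) = Some q & lead t.+1 = lead t])
  \/ (pos t.+1 (lead t) = pos t (lead t) /\ lead t.+1 = (lead t).+1).
Proof.
move=> /step_running [[p [at_p [moving stopping]]] _].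
case: (classic (has_frontier_nb R pos t p)) => [/moving|/stopping].
  by case=> q [_ fr_q -> ->]; left; exists q.
by rewrite at_p; right.
Qed.

Lemma arrival t r : t < T -> pos t r = None -> pos t.+1 r <> None ->
  [/\ lead t < r, door_vacated s pos t, pos t r.-1 <> None & pos t.+1 r = Some s].
Proof.
move=> tT absent present; case: (ltngtP r (lead t)) => [lt_r|gt_r|eq_r].
- by rewrite stopped_stay in present.
- case: (step_running tT) => _ [_ [_ /(_ r gt_r absent)]].
  by case=> [[-> []]|[new_absent _]] //; rewrite new_absent in present.
- by rewrite eq_r in absent; case: (lead_present absent).
Qed.

Lemma lead_next t : t < T -> lead t.+1 = lead t \/ lead t.+1 = (lead t).+1.
Proof. by move/leader_step => [[q [_ _ ->]]|[_ ->]]; [left|right]. Qed.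

Lemma lead_mono t1 t2 : t1 <= t2 <= T -> lead t1 <= lead t2.
Proof.
elim: t2 => [|t2 IH] /andP[le12 t2T]; first by move: le12; rewrite leqn0 => /eqP ->.
move: le12; rewrite leq_eqVlt => /orP[/eqP -> //|le12].
have le_lead : lead t1 <= lead t2 by apply: IH; rewrite -ltnS le12 ltnW.
by case: (lead_next t2T) => ->; lia.
Qed.

Lemma present_later_of n :
  (forall m, m < n -> forall r, pos m r <> None -> pos m.+1 r <> None) ->
  forall t1 t2 r, t1 <= t2 <= n -> pos t1 r <> None -> pos t2 r <> None.
Proof.
move=> persists t1; elim=> [|t2 IH] r /andP[le12 t2n].
  by move: le12; rewrite leqn0 => /eqP ->.
move: le12; rewrite leq_eqVlt => /orP[/eqP -> //|le12] present.
by apply: (persists _ t2n); apply: (IH r _ present); rewrite -ltnS le12 (ltnW t2n).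
Qed.

(* The door facts (the robot on the
   door is the newest one and has not moved since it arrived) are what make a
   newly arrived robot start exactly two steps behind its predecessor. *)
Record invariant (t : nat) : Prop := Invariant {
  present_pred : forall r, pos t r.+1 <> None -> pos t r <> None;
  present_pred_lag : forall r, pos t r.+1 <> None -> 1 < t /\ pos t.-2 r <> None;
  door_last : forall j i, pos t j = Some s -> j < i -> pos t i = None;
  door_since_arrival : forall j t', pos t j = Some s -> t' <= t ->
    pos t' j <> None -> pos t' j = Some s;
  follower_trails : forall r, lead t < r -> pos t r <> None ->
    1 < t /\ pos t r = pos t.-2 r.-1;
  present_persists : t < T -> forall r, pos t r <> None -> pos t.+1 r <> None }.

Lemma present_prefix t : (forall r, pos t r.+1 <> None -> pos t r <> None) ->
  forall i j, i <= j -> pos t j <> None -> pos t i <> None.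
Proof.
move=> pred_present i; elim=> [|j IH]; first by rewrite leqn0 => /eqP ->.
rewrite leq_eqVlt => /orP[/eqP -> //|]; rewrite ltnS => le_ij present.
exact/IH/pred_present.
Qed.

Lemma present_lt_absent t y x : invariant t ->
  pos t y <> None -> pos t x = None -> y < x.
Proof.
move=> inv present absent; rewrite ltnNge; apply/negP => le_xy.
exact: present_prefix (present_pred inv) _ _ le_xy present absent.
Qed.

Lemma present_persists_of t : t < T ->
  (forall r, lead t < r -> pos t r <> None -> 1 < t /\ pos t r = pos t.-2 r.-1) ->
  (1 < t -> forall r, pos t.-2 r <> None -> pos t.-1 r <> None) ->
  forall r, pos t r <> None -> pos t.+1 r <> None.
Proof.
move=> tT trails persists2 r present; case: (ltngtP r (lead t)) => [lt_r|gt_r|->].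
- by rewrite stopped_stay.
- rewrite follower_step //; case: (trails r gt_r present) => t_gt1 eq_pos.
  by apply: persists2; rewrite -?eq_pos.
- by case: (leader_step tT) => [[q [_ -> _]]|[-> _]] //; apply: lead_present.
Qed.

Lemma invariant0 : invariant 0.
Proof.
have trails r : lead 0 < r -> pos 0 r <> None -> 1 < 0 /\ pos 0 r = pos 0 r.-1.
  by rewrite lead_start => /pos_start_absent ->.
split=> //.
- by move=> r; rewrite pos_start_absent.
- by move=> r; rewrite pos_start_absent.
- by case=> [|j] i; [move=> _ /pos_start_absent | rewrite pos_start_absent].
- by move=> j t' door; rewrite leqn0 => /eqP ->.
- by move=> T_gt0; apply: present_persists_of.
Qed.

Section InvariantStep.
Variable u : nat.
Hypothesis uT : u < T.
Hypothesis IH : forall m, m <= u -> invariant m.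

Lemma present_later t1 t2 r : t1 <= t2 <= u.+1 -> pos t1 r <> None -> pos t2 r <> None.
Proof.
apply: present_later_of => m; rewrite ltnS => m_le_u.
exact: (present_persists (IH m_le_u) (leq_ltn_trans m_le_u uT)).
Qed.

Lemma door_robot_unique t y z : t <= u ->
  pos t y = Some s -> pos t z = Some s -> y = z.
Proof.
move=> tu door_y door_z; case: (ltngtP y z) => // [lt_yz|lt_zy].
- by move: (door_last (IH tu) door_y lt_yz); rewrite door_z.
- by move: (door_last (IH tu) door_z lt_zy); rewrite door_y.
Qed.

Lemma door_empty_before_arrival x y :
  pos u.-1 x = None -> pos u x <> None -> pos u.-1 y <> Some s.
Proof.
(* Arrival at u means some z left the door at step u-2 -> u-1, whereas a robot
   on the door at u-1 is the predecessor of x, hence on the door since u-2. *)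
move=> absent present door_y.
have u_gt0 : 0 < u by case: (posnP u) absent present => [-> ->|].
have u_eq : u = u.-1.+1 by rewrite prednK.
have inv_prev : invariant u.-1 by apply: IH; apply: leq_pred.
move: present; rewrite {1}u_eq => present.
have [_ [_ [z [door_z z_left]]] pred_present _] :=
  arrival (leq_ltn_trans (leq_pred u) uT) absent present.
have lt_yx : y < x by apply: present_lt_absent inv_prev _ absent; rewrite door_y.
have eq_y : x = y.+1.
  case: (ltnP y x.-1) => [lt_y|]; last by lia.
  by rewrite (door_last inv_prev door_y lt_y) in pred_present.
rewrite -u_eq eq_y in present.
have [_ prev_y] := present_pred_lag (IH (leqnn u)) present.
have door_y' : pos u.-2 y = Some s.
  exact: (door_since_arrival inv_prev door_y (leq_pred _) prev_y).
have eq_zy : z = y by apply: door_robot_unique door_z door_y'; lia.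
by rewrite eq_zy door_y in z_left.
Qed.

Lemma present_before_vacating r :
  door_vacated s pos u -> pos u r <> None -> pos u.-1 r <> None.
Proof.
move=> [_ [y [door_y _]]] present absent.
exact: door_empty_before_arrival absent present door_y.
Qed.

Lemma present_pred_succ r : pos u.+1 r.+1 <> None -> pos u.+1 r <> None.
Proof.
move=> present; have persists := present_persists (IH (leqnn u)) uT.
case: (pos u r.+1 =P None) => [absent|/(present_pred (IH (leqnn u)))/persists //].
by have [_ _ pred_present _] := arrival uT absent present; apply: persists.
Qed.

Lemma present_pred_lag_succ r :
  pos u.+1 r.+1 <> None -> 1 < u.+1 /\ pos u.+1.-2 r <> None.
Proof.
move=> present /=; case: (pos u r.+1 =P None) => [absent|present_u].
  have [_ vacated pred_present _] := arrival uT absent present.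
  by split; [case: vacated | exact: present_before_vacating].
have [u_gt1 prev] := present_pred_lag (IH (leqnn u)) present_u.
split; first exact: ltnW.
have -> : u.-1 = u.-2.+1 by lia.
by apply: (present_persists (IH _)) prev; lia.
Qed.

Lemma door_stays j : pos u.+1 j = Some s -> pos u j <> None -> pos u j = Some s.
Proof.
move=> door present; have inv := IH (leqnn u).
case: (ltngtP j (lead u)) => [lt_j|gt_j|eq_j].
- by rewrite -stopped_stay.
- move: door; rewrite follower_step // => door.
  have [_ ->] := follower_trails inv gt_j present.
  apply: (door_since_arrival (IH (leq_pred u)) door (leq_pred _)).
  by have [_ <-] := follower_trails inv gt_j present.
- rewrite eq_j in door *; case: (leader_step uT) => [[q [fr_q at_q _]]|[<- _] //].
  rewrite at_q in door; case: door => q_s; rewrite q_s in fr_q.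
  by case: (door_not_frontier fr_q).
Qed.

Lemma door_since_arrival_succ j t' : pos u.+1 j = Some s -> t' <= u.+1 ->
  pos t' j <> None -> pos t' j = Some s.
Proof.
move=> door; rewrite leq_eqVlt => /orP[/eqP -> //|]; rewrite ltnS => le_t' present.
have present_u : pos u j <> None by apply: present_later present; rewrite le_t' /=.
exact: (door_since_arrival (IH (leqnn u)) (door_stays door present_u) le_t' present).
Qed.

Lemma door_last_succ j i : pos u.+1 j = Some s -> j < i -> pos u.+1 i = None.
Proof.
move=> door lt_ji; case: (pos u.+1 i =P None) => // present_i; exfalso.
have present_succ : pos u.+1 j.+1 <> None.
  exact: present_prefix present_pred_succ _ _ lt_ji present_i.
have inv := IH (leqnn u).
case: (pos u j.+1 =P None) => [absent_succ|present_succ_u]; last first.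
  have door_u := door_stays door (present_pred inv present_succ_u).
  by case: present_succ_u; exact: (door_last inv door_u (ltnSn j)).
have [_ vacated present_j _] := arrival uT absent_succ present_succ.
have door_u := door_stays door present_j.
have [_ [y [door_y y_left]]] := vacated.
have door_prev : pos u.-1 j = Some s.
  apply: (door_since_arrival inv door_u (leq_pred u)).
  exact: present_before_vacating vacated present_j.
by rewrite (door_robot_unique (leq_pred u) door_y door_prev) door_u in y_left.
Qed.

Lemma follower_trails_succ r : lead u.+1 < r -> pos u.+1 r <> None ->
  1 < u.+1 /\ pos u.+1 r = pos u.+1.-2 r.-1.
Proof.
move=> gt_r present /=; have inv := IH (leqnn u).
have gt_r_u : lead u < r by apply: leq_ltn_trans gt_r; apply: lead_mono; rewrite leqnSn.
case: (pos u r =P None) => [absent|present_u]; last first.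
  have [u_gt1 _] := follower_trails inv gt_r_u present_u.
  by split; [exact: ltnW | rewrite follower_step].
have [_ vacated pred_present ->] := arrival uT absent present.
have [u_gt0 [y [door_y _]]] := vacated.
split=> //.
have present_prev := present_before_vacating vacated pred_present.
have lt_yr : y < r.
  apply: present_lt_absent inv _ absent.
  have -> : u = u.-1.+1 by lia.
  by apply: (present_persists (IH (leq_pred u))); [lia | rewrite door_y].
case: (ltnP y r.-1) => [lt_y|ge_y]; last by have -> : r.-1 = y by lia.
by rewrite (door_last (IH (leq_pred u)) door_y lt_y) in present_prev.
Qed.

Lemma invariant_succ : invariant u.+1.
Proof.
split.
- exact: present_pred_succ.
- exact: present_pred_lag_succ.
- exact: door_last_succ.
- exact: door_since_arrival_succ.
- exact: follower_trails_succ.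
- move=> uT'; apply: present_persists_of uT' follower_trails_succ _ => u_gt0 r /= present.
  rewrite -(prednK u_gt0).
  by apply: (present_persists (IH (leq_pred u))) present; rewrite prednK // ltnW.
Qed.

End InvariantStep.

Lemma invariant_upto t : t <= T -> invariant t.
Proof.
elim/ltn_ind: t => [[|u] IH tT]; first exact: invariant0.
apply: (invariant_succ tT) => m le_m.
by apply: IH; [rewrite ltnS | apply: leq_trans tT; rewrite ltnW].
Qed.

Lemma present_later_upto t1 t2 r : t1 <= t2 <= T ->
  pos t1 r <> None -> pos t2 r <> None.
Proof.
apply: present_later_of => m mT.
exact: (present_persists (invariant_upto (ltnW mT)) mT).
Qed.

Lemma move_to_fresh t r p : t < T -> pos t r = Some p -> pos t.+1 r <> Some p ->
  exists q, [/\ pos t.+1 r = Some q, q \in R & forall t', t' <= t -> pos t' r <> Some q].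
Proof.
elim/ltn_ind: t r p => t IHt r p tT at_p moved.
case: (ltngtP r (lead t)) => [lt_r|gt_r|eq_r].
- by rewrite stopped_stay in moved.
- have present : pos t r <> None by rewrite at_p.
  have [t_gt1 trail] := follower_trails (invariant_upto (ltnW tT)) gt_r present.
  have t_eq : t.-1 = t.-2.+1 by lia.
  rewrite follower_step // t_eq in moved *; rewrite trail in at_p.
  have [q [at_q q_R fresh]] := IHt t.-2 ltac:(lia) r.-1 p ltac:(lia) at_p moved.
  exists q; split=> // t' le_t' at_q'.
  have gt_r' : lead t' < r by apply: leq_ltn_trans gt_r; apply: lead_mono; rewrite le_t' ltnW.
  have present' : pos t' r <> None by rewrite at_q'.
  have inv' := invariant_upto (leq_trans le_t' (ltnW tT)).
  have [_ trail'] := follower_trails inv' gt_r' present'.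
  by apply: (fresh t'.-2); [lia | rewrite -trail'].
- rewrite eq_r in at_p moved *.
  case: (leader_step tT) => [[q [[q_R unocc] at_q _]]|[stay _]].
    exists q; split=> // t' le_t' at_q'.
    by apply: (unocc t' le_t'); exists (lead t).
  by rewrite stay at_p in moved.
Qed.

Lemma moves_le_card r : moves pos r T <= #|` R|.
Proof.
have fresh t : t < T -> (pos t r != None) && (pos t.+1 r != pos t r) ->
    exists q, [/\ pos t.+1 r = Some q, q \in R & forall t', t' <= t -> pos t' r <> Some q].
  by case E: (pos t r) => [p|//] tT /andP[_ /eqP moved]; apply: move_to_fresh tT E moved.
apply: (@sum_injective_le_card _ _ (fun t => (pos t r != None) && (pos t.+1 r != pos t r))
          (fun t => odflt s (pos t.+1 r))).
  by move=> t tT /(fresh _ tT) [q [-> q_R _]].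
move=> t1 t2 /andP[lt12 t2T] moved1 moved2.
have [q1 [at_q1 _ _]] := fresh _ (ltn_trans lt12 t2T) moved1.
have [q2 [at_q2 _ fresh2]] := fresh _ t2T moved2.
rewrite at_q1 at_q2 /=; apply/eqP => eq_q; rewrite eq_q in at_q1.
exact: fresh2 t1.+1 lt12 at_q1.
Qed.

Lemma moves_absent r : pos T r = None -> moves pos r T = 0.
Proof.
move=> absent; apply: big1 => [[t tT]] _ /=.
case E: (pos t r) => [p|//] /=.
have present : pos T r <> None.
  by apply: (@present_later_upto t); [rewrite (ltnW tT) leqnn | rewrite E].
by rewrite absent in present.
Qed.

Lemma leader_moves_count n : n <= T ->
  (\sum_(t < n) (lead t.+1 == lead t) + lead n)%N = n.
Proof.
elim: n => [|n IH] nT; first by rewrite big_ord0 lead_start.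
have := IH (ltnW nT); rewrite big_ord_recr /=.
by case: (lead_next nT) => ->; rewrite ?eqxx ?(gtn_eqF (ltnSn _)) /=; lia.
Qed.

Lemma leader_moves_lt_card : s \in R -> \sum_(t < T) (lead t.+1 == lead t) < #|` R|.
Proof.
move=> s_R; rewrite (cardfsD1 s) s_R add1n ltnS.
have fresh t : t < T -> lead t.+1 == lead t ->
    exists q, frontier R pos t q /\ pos t.+1 (lead t) = Some q.
  move=> tT /eqP same; case: (leader_step tT) => [[q [fr_q at_q _]]|[_ next]].
    by exists q.
  by rewrite next in same; lia.
apply: (@sum_injective_le_card _ _ (fun t => lead t.+1 == lead t)
          (fun t => odflt s (pos t.+1 (lead t)))).
  move=> t tT /(fresh _ tT) [q [fr_q ->]] /=; rewrite in_fsetD1 (proj1 fr_q) andbT.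
  by apply/eqP => eq_q; rewrite eq_q in fr_q; apply: door_not_frontier fr_q.
move=> t1 t2 /andP[lt12 t2T] moved1 moved2.
have [q1 [_ at_q1]] := fresh _ (ltn_trans lt12 t2T) moved1.
have [q2 [[_ unocc] at_q2]] := fresh _ t2T moved2.
rewrite at_q1 at_q2 /=; apply/eqP => eq_q.
by apply: (unocc t1.+1 lt12); exists (lead t1); rewrite at_q1 eq_q.
Qed.

Lemma present_spacing r t : t <= T -> pos t r <> None -> 2 * r <= t.
Proof.
elim: r t => [|r IH] t tT present; first by rewrite muln0.
have [t_gt1 prev] := present_pred_lag (invariant_upto tT) present.
have := IH t.-2 (leq_trans (leq_trans (leq_pred _) (leq_pred _)) tT) prev; lia.
Qed.

Lemma present_lt_card r : s \in R -> pos T r <> None -> r < #|` R|.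
Proof.
(* 2 r <= T = (leader moves) + lead T < |R| + lead T and 2 lead T <= T. *)
move=> s_R present.
have := present_spacing (leqnn T) present.
have := present_spacing (leqnn T) (@lead_present T).
have := leader_moves_count (leqnn T).
have := leader_moves_lt_card s_R.
lia.
Qed.

End DFLF.

Lemma halted_forever R s pos lead t : dflf_run R s pos lead -> halted R s pos lead t ->
  forall k, halted R s pos lead (t + k)%N /\ forall r, pos (t + k)%N r = pos t r.
Proof.
case=> _ _ _ steps halt_t; elim=> [|k [halt_k frozen]]; first by rewrite addn0.
have [next_pos next_lead] := proj1 (steps _) halt_k.
rewrite addnS; split=> [|r]; last by rewrite next_pos.
case: halt_k => at_door no_frontier; split; first by rewrite next_lead next_pos.
move=> [q [adj_q [q_R unocc]]]; apply: no_frontier.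
exists q; split=> //; split=> // t' le_t'.
exact/unocc/(leq_trans le_t').
Qed.

Lemma running_before_makespan R s pos lead T : dflf_run R s pos lead ->
  makespan R pos T -> forall t, t < T -> ~ halted R s pos lead t.
Proof.
move=> run [filled_T not_filled] t tT halt_t; apply: (not_filled t tT) => q q_R.
have [r at_r] := filled_T q q_R; exists r.
by have [_ <-] := halted_forever run halt_t (T - t); rewrite subnKC // ltnW.
Qed.

Theorem mainTheorem4 (R : {fset pixel}) (s : pixel)
    (pos : nat -> nat -> option pixel) (lead : nat -> nat) (T : nat) :
  connected_env R -> s \in R ->
  dflf_run R s pos lead -> makespan R pos T ->
  (forall r, moves pos r T <= #|` R|) /\
  (forall N, \sum_(r < N) moves pos r T <= #|` R| ^ 2).
Proof.
move=> _ s_R run span; have running := running_before_makespan run span.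
have moves_le r := moves_le_card run running r.
split=> // N; apply: (@sum_bounded_le_sqr (fun r => moves pos r T)) => // r card_le_r.
apply: (moves_absent run running); case: (pos T r =P None) => // present.
by move: (present_lt_card run running s_R present); rewrite ltnNge card_le_r.
Qed.
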